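(* Let $\mathcal{U}$ and $\mathcal{A}$ be separable Banach spaces with duals $\mathcal{U}^*,\mathcal{A}^*$ and pairings $[\cdot,\cdot]_{\mathcal{U}},[\cdot,\cdot]_{\mathcal{A}}$, with quadratic norms $\|u\|_{\mathcal{U}}^2=[\mathcal{K}^{-1}u,u]_{\mathcal{U}}$, $\|a\|_{\mathcal{A}}^2=[\mathcal{S}^{-1}a,a]_{\mathcal{A}}$ given by invertible symmetric positive linear maps $\mathcal{K}:\mathcal{U}^*\to\mathcal{U}$, $\mathcal{S}:\mathcal{A}^*\to\mathcal{A}$. Let $\Omega\subseteq\mathbb{R}^d$ be bounded and consider the parametric PDE $\mathcal{P}(u;a)(\mathbf{x})=f(\mathbf{x})$ on $\Omega$, $\mathcal{B}(u;a)(\mathbf{x})=g(\mathbf{x})$ on $\partial\Omega$, where (Assumption) there exist bounded linear $L_1,\dots,L_Q\in\mathcal{L}(\mathcal{U};C(\Omega))$ with $L_1,\dots,L_{Q_b}\in\mathcal{L}(\mathcal{U};C(\partial\Omega))$ ($1\le Q_b\le Q$), bounded linear $\widetilde{L}_1,\dots,\widetilde{L}_J\in\mathcal{L}(\mathcal{A};C(\overline{\Omega}))$, and maps $P:\mathbb{R}^{Q+J}\to\mathbb{R}$, $B:\mathbb{R}^{Q_b+J}\to\mathbb{R}$ with $\mathcal{P}(u;a)(\mathbf{x})=P(L_1(u)(\mathbf{x}),\dots,L_Q(u)(\mathbf{x});\widetilde{L}_1(a)(\mathbf{x}),\dots,\widetilde{L}_J(a)(\mathbf{x}))$ on $\Omega$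 and $\mathcal{B}(u;a)(\mathbf{x})=B(L_1(u)(\mathbf{x}),\dots,L_{Q_b}(u)(\mathbf{x});\widetilde{L}_1(a)(\mathbf{x}),\dots,\widetilde{L}_J(a)(\mathbf{x}))$ on $\partial\Omega$. Let $\psi_1,\dots,\psi_I\in\mathcal{U}^*$, $\boldsymbol{\psi}=(\psi_1,\dots,\psi_I)$, $\mathbf{o}\in\mathbb{R}^I$, $\gamma\ne0$. With the objects in the context, assume $\Theta$ and $\widetilde{\Theta}$ are invertible. Then $(u^\dagger,a^\dagger)\in\mathcal{U}\times\mathcal{A}$ is a minimizer of $$\min_{(u,a)\in\mathcal{U}\times\mathcal{A}}\ \|u\|_{\mathcal{U}}^2+\|a\|_{\mathcal{A}}^2+\frac{1}{\gamma^2}|[\boldsymbol{\psi},u]-\mathbf{o}|^2\ \text{ s.t. }\ \mathcal{P}(u;a)(\mathbf{x}_m)=f(\mathbf{x}_m),\ 1\le m\le M_\Omega;\ \mathcal{B}(u;a)(\mathbf{x}_m)=g(\mathbf{x}_m),\ M_\Omega<m\le M$$ if and only if $u^\dagger=\sum_{n=1}^{I+N}z^\dagger_n\chi_n$ and $a^\dagger=\sum_{n=1}^{\widetilde{N}}\widetilde{z}^\dagger_n\widetilde{\chi}_n$, where $(\mathbf{z}^\dagger,\widetilde{\mathbf{z}}^\dagger)$ is a minimizer of $$\min_{(\mathbf{z},\widetilde{\mathbf{z}})\in\mathbb{R}^{I+N}\times\mathbb{R}^{\widetilde{N}}}\ \mathbf{z}^T\Theta^{-1}\mathbf{z}+\widetilde{\mathbf{z}}^T\widetilde{\Theta}^{-1}\widetilde{\mathbf{z}}+\frac{1}{\gamma^2}|\Pi^I\mathbf{z}-\mathbf{o}|^2\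 \text{ s.t. }\ F(\Pi_N\mathbf{z};\widetilde{\mathbf{z}})=\mathbf{y}.$$
   Context: Collocation points $\mathbf{x}_1,\dots,\mathbf{x}_{M_\Omega}\in\Omega$, $\mathbf{x}_{M_\Omega+1},\dots,\mathbf{x}_M\in\partial\Omega$. $\phi^{(q)}_m=\delta_{\mathbf{x}_m}\circ L_q\in\mathcal{U}^*$ for $1\le m\le M$ if $q\le Q_b$, for $1\le m\le M_\Omega$ if $q>Q_b$; $\boldsymbol{\phi}=(\boldsymbol{\phi}^{(1)},\dots,\boldsymbol{\phi}^{(Q)})$ with $N=MQ_b+M_\Omega(Q-Q_b)$ entries. $\widetilde{\phi}^{(j)}_m=\delta_{\mathbf{x}_m}\circ\widetilde{L}_j\in\mathcal{A}^*$ for $m=1,\dots,M$, $j=1,\dots,J$; $\widetilde{\boldsymbol{\phi}}=(\widetilde{\boldsymbol{\phi}}^{(1)},\dots,\widetilde{\boldsymbol{\phi}}^{(J)})$ with $\widetilde{N}=MJ$ entries. $\boldsymbol{\varphi}=(\varphi_1,\dots,\varphi_{I+N})$ with $\varphi_n=\psi_n$ for $n\le I$ and $\varphi_n=\phi_{n-I}$ for $n>I$ (the $\phi_k$ being the entries of $\boldsymbol{\phi}$). $\Theta_{i,n}=[\varphi_i,\mathcal{K}\varphi_n]_{\mathcal{U}}$, $\widetilde{\Theta}_{i,n}=[\widetilde{\phi}_i,\mathcal{S}\widetilde{\phi}_n]_{\mathcal{A}}$; $\chi_i=\sum_{n=1}^{N+I}(\Theta^{-1})_{i,n}\mathcal{K}\varphi_n$,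 $\widetilde{\chi}_i=\sum_{n=1}^{\widetilde{N}}(\widetilde{\Theta}^{-1})_{i,n}\mathcal{S}\widetilde{\phi}_n$. $y_m=f(\mathbf{x}_m)$ for $m\le M_\Omega$, $g(\mathbf{x}_m)$ otherwise. $F$ is defined by $(F([\boldsymbol{\phi},u]_{\mathcal{U}};[\widetilde{\boldsymbol{\phi}},a]_{\mathcal{A}}))_m=P([\phi^{(1)}_m,u]_{\mathcal{U}},\dots,[\phi^{(Q)}_m,u]_{\mathcal{U}};[\widetilde{\phi}^{(1)}_m,a]_{\mathcal{A}},\dots,[\widetilde{\phi}^{(J)}_m,a]_{\mathcal{A}})$ for $m\le M_\Omega$ and $B([\phi^{(1)}_m,u]_{\mathcal{U}},\dots,[\phi^{(Q_b)}_m,u]_{\mathcal{U}};[\widetilde{\phi}^{(1)}_m,a]_{\mathcal{A}},\dots,[\widetilde{\phi}^{(J)}_m,a]_{\mathcal{A}})$ for $m>M_\Omega$ (so $F$ is a map on vectors in $\mathbb{R}^N\times\mathbb{R}^{\widetilde{N}}$). $\Pi^I:\mathbb{R}^{I+N}\to\mathbb{R}^I$ extracts the first $I$ entries, $\Pi_N:\mathbb{R}^{I+N}\to\mathbb{R}^N$ the last $N$ entries. *)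

From HB Require Import structures.
From mathcomp Require Import all_boot all_order all_algebra.
From mathcomp Require Import all_classical all_reals all_analysis.
Set Implicit Arguments. Unset Strict Implicit. Unset Printing Implicit Defensive.
Import Order.TTheory GRing.Theory Num.Theory.
Import numFieldNormedType.Exports.
Local Open Scope classical_set_scope.
Local Open Scope ring_scope.

Definition boundary (T : topologicalType) (A : set T) : set T :=
  closure A `\` interior A.

Definition separable (T : topologicalType) : Prop :=
  exists D : set T, countable D /\ closure D = setT.

(* (Us, ev) is (a copy of) the topological dual of the normed space U:
   ev is a bilinear pairing [.,.], every ev phi is a continuous linear
   functional, ev is injective, and every continuous linear functional
   arises this way. *)
Definition is_dual_pairing (R : realType) (U : normedModType R) (Us : lmodType R)
    (ev : Us -> U -> R) : Prop :=
  [/\ (forall phi (c : R) u v, ev phi (c *: u + v) = c * ev phi u + ev phi v),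
      (forall (c : R) phi psi u, ev (c *: phi + psi) u = c * ev phi u + ev psi u),
      (forall phi, continuous (ev phi)),
      injective ev &
      (forall l : U -> R, (forall (c : R) u v, l (c *: u + v) = c * l u + l v) ->
          continuous l -> exists phi, ev phi = l)].

Definition is_quadratic_norm_op (R : realType) (U : normedModType R) (Us : lmodType R)
    (ev : Us -> U -> R) (K : Us -> U) (Kinv : U -> Us) : Prop :=
  (forall (c : R) phi psi, K (c *: phi + psi) = c *: K phi + K psi) /\
  cancel K Kinv /\ cancel Kinv K /\
  (forall phi psi, ev phi (K psi) = ev psi (K phi)) /\
  (forall phi, phi != 0 -> 0 < ev phi (K phi)) /\
  (forall u, `|u| ^+ 2 = ev (Kinv u) u).

(* L is a bounded linear operator from U into C(D) (continuous functions on D,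
   sup-norm): linear, each L u continuous on D, and sup_D |L u| <= C |u|. *)
Definition bounded_linear_into_C (R : realType) (d : nat) (U : normedModType R)
    (D : set 'rV[R]_d) (L : U -> 'rV[R]_d -> R) : Prop :=
  [/\ (forall (c : R) u v x, L (c *: u + v) x = c * L u x + L v x),
      (forall u, {within D, continuous (L u)}) &
      (exists C : R, forall u x, D x -> `|L u x| <= C * `|u|)].

Definition is_minimizer (T : Type) (R : realType) (C : T -> Prop) (obj : T -> R)
    (t : T) : Prop :=
  C t /\ forall t', C t' -> obj t <= obj t'.

(* number of collocation functionals attached to operator q *)
Definition cnt (Q Qb M MO : nat) (q : 'I_Q) : nat := if (q < Qb)%N then M else MO.

(* the ordered list phi = (phi^(1), ..., phi^(Q)), phi^(q) = (phi^(q)_m)_m *)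
Definition phi_seq (V : Type) (Q Qb M MO : nat) (phi : 'I_Q -> 'I_M -> V) : seq V :=
  flatten [seq [seq phi q m | m <- take (cnt Qb M MO q) (enum 'I_M)] | q <- enum 'I_Q].

(* the ordered list phit = (phit^(1), ..., phit^(J)), phit^(j) = (phit^(j)_m)_(m=1..M) *)
Definition phit_seq (V : Type) (J M : nat) (phit : 'I_J -> 'I_M -> V) : seq V :=
  flatten [seq [seq phit j m | m <- enum 'I_M] | j <- enum 'I_J].

(* position (0-based) of phi^(q)_m in that list *)
Definition pos (Q Qb M MO : nat) (q : 'I_Q) (m : nat) : nat :=
  (\sum_(q' < Q | (q' < q)%N) cnt Qb M MO q' + m)%N.

(* nat-indexed entry of a column vector (0 outside the range) *)
Definition vnth (R : realType) (n : nat) (w : 'cV[R]_n) (k : nat) : R :=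
  if insub k is Some i then w i 0 else 0.

Definition Fmap (R : realType) (Q Qb J M MO N : nat) (Hb : (Qb <= Q)%N)
    (P : ('I_Q -> R) -> ('I_J -> R) -> R) (B : ('I_Qb -> R) -> ('I_J -> R) -> R)
    (w : 'cV[R]_N) (wt : 'cV[R]_(J * M)) : 'cV[R]_M :=
  \col_(m < M)
    if (m < MO)%N then
      P (fun q => vnth w (pos Qb M MO q m)) (fun j => vnth wt (j * M + m)%N)
    else
      B (fun q => vnth w (pos Qb M MO (widen_ord Hb q) m)) (fun j => vnth wt (j * M + m)%N).

From HB Require Import structures.
From mathcomp Require Import all_boot all_order all_algebra.
From mathcomp Require Import all_classical all_reals all_analysis.
Import Order.TTheory GRing.Theory Num.Theory.
Import numFieldNormedType.Exports.
From mathcomp Require Import lra.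
Local Open Scope classical_set_scope.
Local Open Scope ring_scope.

(* Write measvec u := ([phi_n, u])_n and synth z := sum_n z_n chi_n.  Since
   chi_n = sum_k (Theta^-1)_{nk} K phi_k, measvec (synth z) = z and
   |synth z|^2 = z^T Theta^-1 z.  The residual r := u - synth (measvec u) has
   [phi_n, r] = 0 for all n, so by the symmetry of K it is orthogonal to
   synth (measvec u) for the inner product [K^-1 _, _], whence
   |u|^2 = |synth (measvec u)|^2 + |r|^2.  The collocation constraints and the
   misfit term see (u, a) only through its measurements, so replacing (u, a) by
   the synthesis of its measurements keeps it feasible and lowers the objective
   by |r_u|^2 + |r_a|^2; minimizers of the first problem are thus exactly the
   syntheses of minimizers of the second. *)

Set Implicit Arguments.
Unset Strict Implicit.

Lemma is_minimizer_transfer (R : realType) (X Z : Type)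
    (CX : X -> Prop) (objX : X -> R) (CZ : Z -> Prop) (objZ : Z -> R)
    (coef : X -> Z) (recon : Z -> X) (defect : X -> R) :
  cancel recon coef ->
  (forall x, CX x <-> CZ (coef x)) ->
  (forall x, objX x = objZ (coef x) + defect x) ->
  (forall x, 0 <= defect x) ->
  (forall x, defect x = 0 <-> x = recon (coef x)) ->
  forall x, is_minimizer CX objX x <-> exists z, is_minimizer CZ objZ z /\ x = recon z.
Proof.
move=> reconK feasE objE defect_ge0 defect0P x.
have objX_recon z : objX (recon z) = objZ z.
  by rewrite objE reconK (defect0P _).2 ?reconK ?addr0.
have CX_recon z : CX (recon z) <-> CZ z by rewrite feasE reconK.
split=> [[Cx x_min] | [z [[Cz z_min] ->]]].
  have x_recon : x = recon (coef x).
    apply/defect0P/eqP; rewrite eq_le defect_ge0 andbT.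
    have := x_min _ ((CX_recon _).2 ((feasE x).1 Cx)).
    by rewrite objX_recon objE gerDl.
  exists (coef x); split=> //; split=> [|z Cz]; first exact/feasE.
  rewrite -objX_recon -x_recon -(objX_recon z); apply: x_min; exact/CX_recon.
split=> [|x' Cx']; first exact/CX_recon.
rewrite objX_recon objE; have := z_min _ ((feasE x').1 Cx'); have := defect_ge0 x'.
lra.
Qed.

Section Measurements.
Variables (R : realType) (V : Type) (Vs : lmodType R) (ev : Vs -> V -> R).

Definition measvec n (vp : 'I_n -> Vs) (u : V) : 'cV[R]_n := \col_i ev (vp i) u.

Lemma vnth_measvec_nth (s : seq Vs) n u k : (k < n)%N ->
  vnth (measvec (fun i : 'I_n => nth 0 s i) u) k = ev (nth 0 s k) u.
Proof. by move=> lt_kn; rewrite /vnth insubT mxE. Qed.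

Section Concatenation.
Variables (n1 n2 : nat) (a : 'I_n1 -> Vs) (b : 'I_n2 -> Vs).
Let ab (k : 'I_(n1 + n2)) := match fintype.split k with inl i => a i | inr j => b j end.

Lemma usubmx_measvec u : usubmx (measvec ab u) = measvec a u.
Proof.
by apply/matrixP => i k; rewrite !mxE /ab (unsplitK (inl i) : fintype.split (lshift n2 i) = _).
Qed.

Lemma dsubmx_measvec u : dsubmx (measvec ab u) = measvec b u.
Proof.
by apply/matrixP => j k; rewrite !mxE /ab (unsplitK (inr j) : fintype.split (rshift n1 j) = _).
Qed.

End Concatenation.
End Measurements.

Section Representer.
Variables (R : realType) (V : normedModType R) (Vs : lmodType R).
Variables (ev : Vs -> V -> R) (K : Vs -> V) (Kinv : V -> Vs).
Variables (n : nat) (vp : 'I_n -> Vs).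

Definition gram : 'M[R]_n := \matrix_(i, j) ev (vp i) (K (vp j)).

Definition synth (z : 'cV[R]_n) : V := \sum_i z i 0 *: \sum_j invmx gram i j *: K (vp j).

Hypothesis evl : forall phi (c : R) u v, ev phi (c *: u + v) = c * ev phi u + ev phi v.
Hypothesis evr : forall (c : R) phi psi u, ev (c *: phi + psi) u = c * ev phi u + ev psi u.
Hypothesis hK : is_quadratic_norm_op ev K Kinv.

Let ev_bilinear : bilinear_for *%R *%R ev.
Proof. by split=> [u c phi psi | phi c u v]; [exact: evr | exact: evl]. Qed.
HB.instance Definition _ := bilinear_isBilinear.Build R Vs V R *%R *%R ev ev_bilinear.
Let K_linear : linear K. Proof. by case: hK. Qed.
HB.instance Definition _ := GRing.isLinear.Build R Vs V *:%R K K_linear.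

Let KK : cancel K Kinv. Proof. by case: hK => _ []. Qed.
Let KinvK : cancel Kinv K. Proof. by case: hK => _ [_ []]. Qed.
Let ev_K_sym phi psi : ev phi (K psi) = ev psi (K phi).
Proof. by case: hK => _ [_ [_ []]]. Qed.
Let sqr_norm_ev u : `|u| ^+ 2 = ev (Kinv u) u.
Proof. by case: hK => _ [_ [_ [_ []]]]. Qed.

Lemma tr_gram : gram^T = gram.
Proof. by apply/matrixP => i j; rewrite !mxE ev_K_sym. Qed.

Lemma tr_invmx_gram : (invmx gram)^T = invmx gram.
Proof. by rewrite trmx_inv tr_gram. Qed.

Lemma synthE z : synth z = K (\sum_j (invmx gram *m z) j 0 *: vp j).
Proof.
rewrite linear_sum /synth; under eq_bigr do rewrite scaler_sumr.
rewrite exchange_big; apply: eq_bigr => j _.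
rewrite linearZ /= mxE scaler_suml; apply: eq_bigr => i _.
by rewrite scalerA -[in invmx gram i j]tr_invmx_gram mxE mulrC.
Qed.

Lemma ev_span_eq0 (w : 'I_n -> R) r :
  measvec ev vp r = 0 -> ev (\sum_j w j *: vp j) r = 0.
Proof.
move=> r0; rewrite linear_sumlz big1 // => j _.
have := congr1 (fun col : 'cV[R]_n => col j 0) r0; rewrite !mxE => r_j.
by rewrite linearZl /= r_j mulr0.
Qed.

Hypothesis gram_unit : gram \in unitmx.

Lemma ev_synth j z : ev (vp j) (synth z) = z j 0.
Proof.
rewrite synthE linear_sum linear_sumr.
rewrite -[z in RHS]mul1mx -(mulmxV gram_unit) -mulmxA mxE.
by apply: eq_bigr => k _; rewrite linearZ /= linearZr /= [gram _ _]mxE mulrC.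
Qed.

Lemma measvec_synth : cancel synth (measvec ev vp).
Proof. by move=> z; apply/matrixP => j k; rewrite ord1 mxE ev_synth. Qed.

Lemma sqr_norm_synth z : `|synth z| ^+ 2 = (z^T *m invmx gram *m z) 0 0.
Proof.
rewrite sqr_norm_ev {1}synthE KK linear_sumlz.
rewrite -[X in z^T *m X]tr_invmx_gram -trmx_mul mxE.
by apply: eq_bigr => j _; rewrite linearZl /= (ev_synth j) !mxE.
Qed.

Lemma sqr_norm_synth_residual u :
  `|u| ^+ 2 = `|synth (measvec ev vp u)| ^+ 2 + `|u - synth (measvec ev vp u)| ^+ 2.
Proof.
set p := synth _; set r := u - p.
have r0 : measvec ev vp r = 0.
  by apply/matrixP => j k; rewrite !mxE linearBr /= (ev_synth j) mxE subrr.
have [s p_Ks s_r] : exists2 s, p = K s & ev s r = 0.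
  by eexists; [exact: synthE | exact: ev_span_eq0].
have u_pr : u = p + r by rewrite addrC subrK.
clearbody p r; subst u p.
have Kinv_sr : Kinv (K s + r) = s + Kinv r by rewrite -{1}(KinvK r) -linearD KK.
have Kinv_r_Ks : ev (Kinv r) (K s) = 0 by rewrite ev_K_sym KinvK.
rewrite !sqr_norm_ev Kinv_sr KK linearDl !linearDr /= s_r Kinv_r_Ks.
by rewrite addr0 add0r.
Qed.

End Representer.

Lemma nth_flatten_index (T : Type) (x0 : T) (ss : seq (seq T)) r c :
  (c < nth 0 (shape ss) r)%N ->
  nth x0 (flatten ss) (flatten_index (shape ss) r c) = nth x0 (nth [::] ss r) c.
Proof. by move=> lt_c; rewrite nth_flatten flatten_indexKl ?flatten_indexKr. Qed.

Lemma map_const_nseq (S T : Type) (y : T) (s : seq S) : [seq y | _ <- s] = nseq (size s) y.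
Proof. by elim: s => //= _ s ->. Qed.

Section CollocationIndex.
Variables (Q Qb M MO : nat).
Hypotheses (hQb : (Qb <= Q)%N) (hMO : (MO <= M)%N).

Let cnts : seq nat := [seq if (k < Qb)%N then M else MO | k <- iota 0 Q].

Let nth_cnts (q : 'I_Q) : nth 0 cnts q = cnt Qb M MO q.
Proof. by rewrite (nth_map 0) ?size_iota // nth_iota. Qed.

Let iota0E n : iota 0 n = index_iota 0 n.
Proof. by rewrite /index_iota subn0. Qed.

Lemma pos_flatten_index (q : 'I_Q) m : pos Qb M MO q m = flatten_index cnts q m.
Proof.
rewrite /pos /flatten_index -map_take take_iota (minn_idPl (ltnW (ltn_ord q))).
rewrite sumnE big_map iota0E big_mkord.
by rewrite (big_ord_widen Q (fun k => if (k < Qb)%N then M else MO) (ltnW (ltn_ord q))).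
Qed.

Lemma sumn_cnts : sumn cnts = (M * Qb + MO * (Q - Qb))%N.
Proof.
rewrite sumnE big_map iota0E (@big_cat_nat _ _ _ Qb 0 Q _ _ (leq0n Qb) hQb) /=.
rewrite (@eq_big_nat _ _ _ 0 Qb _ (fun=> M)) => [|k /andP[_ ->]] //.
rewrite (@eq_big_nat _ _ _ Qb Q _ (fun=> MO)) => [|k /andP[le_Qb_k _]]; last first.
  by rewrite ltnNge le_Qb_k.
by rewrite !sum_nat_const_nat subn0 mulnC [(MO * _)%N]mulnC.
Qed.

Lemma pos_lt (q : 'I_Q) m :
  (m < cnt Qb M MO q)%N -> (pos Qb M MO q m < M * Qb + MO * (Q - Qb))%N.
Proof. by move=> lt_m; rewrite pos_flatten_index -sumn_cnts flatten_indexP ?nth_cnts. Qed.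

Lemma shape_phi_lists (V : Type) (phi : 'I_Q -> 'I_M -> V) :
  shape [seq [seq phi q m | m <- take (cnt Qb M MO q) (enum 'I_M)] | q <- enum 'I_Q] = cnts.
Proof.
rewrite /shape -map_comp /cnts -val_enum_ord -map_comp; apply: eq_map => q /=.
by rewrite size_map size_takel // size_enum_ord /cnt; case: ifP.
Qed.

Lemma nth_phi_seq_pos (V : Type) (x0 : V) (phi : 'I_Q -> 'I_M -> V)
    (q : 'I_Q) (m : 'I_M) :
  (m < cnt Qb M MO q)%N -> nth x0 (phi_seq Qb MO phi) (pos Qb M MO q m) = phi q m.
Proof.
move=> lt_m; rewrite pos_flatten_index -(shape_phi_lists phi) nth_flatten_index; last first.
  by rewrite shape_phi_lists nth_cnts.
rewrite (nth_map q) ?size_enum_ord // nth_ord_enum.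
have le_cnt : (cnt Qb M MO q <= size (enum 'I_M))%N by rewrite size_enum_ord /cnt; case: ifP.
by rewrite (nth_map m) ?size_takel // nth_take // nth_ord_enum.
Qed.

Lemma phit_flatten_index J (j : 'I_J) (m : 'I_M) :
  (j * M + m)%N = flatten_index (nseq J M) j m.
Proof. by rewrite /flatten_index take_nseq ?sumn_nseq 1?mulnC // ltnW. Qed.

Lemma shape_phit_lists (V : Type) J (phit : 'I_J -> 'I_M -> V) :
  shape [seq [seq phit j m | m <- enum 'I_M] | j <- enum 'I_J] = nseq J M.
Proof.
rewrite /shape -map_comp (eq_map (g := fun=> M)) => [|j /=]; last first.
  by rewrite size_map size_enum_ord.
by rewrite map_const_nseq size_enum_ord.
Qed.

Lemma phit_index_lt J (j : 'I_J) (m : 'I_M) : (j * M + m < J * M)%N.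
Proof. by rewrite phit_flatten_index mulnC -sumn_nseq flatten_indexP // nth_nseq ltn_ord. Qed.

Lemma nth_phit_seq (V : Type) (x0 : V) J (phit : 'I_J -> 'I_M -> V)
    (j : 'I_J) (m : 'I_M) :
  nth x0 (phit_seq phit) (j * M + m) = phit j m.
Proof.
rewrite phit_flatten_index -(shape_phit_lists phit) nth_flatten_index; last first.
  by rewrite shape_phit_lists nth_nseq ltn_ord.
rewrite (nth_map j) ?size_enum_ord // nth_ord_enum.
by rewrite (nth_map m) ?size_enum_ord // nth_ord_enum.
Qed.

End CollocationIndex.

Lemma col_if_eqP (T : Type) n k (a b a' b' : 'I_n -> T) :
  \col_(m < n) (if (m < k)%N then a m else b m) =
    \col_m (if (m < k)%N then a' m else b' m) <->
  forall m : 'I_n, ((m < k)%N -> a m = a' m) /\ ((k <= m)%N -> b m = b' m).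
Proof.
split=> [/matrixP eq_ab m | eq_ab].
  by move: (eq_ab m 0); rewrite !mxE; case: ltnP => _ eq_m; split.
by apply/matrixP => m j; rewrite !mxE; case: ltnP => [/(eq_ab m).1 | /(eq_ab m).2].
Qed.

Lemma sqr_normB_add_eq0P (R : numDomainType) (V W : normedModType R)
    (v v' : V) (w w' : W) :
  `|v - v'| ^+ 2 + `|w - w'| ^+ 2 = 0 <-> (v, w) = (v', w').
Proof.
split=> [/eqP | [-> ->]]; last by rewrite !subrr !normr0 expr0n addr0.
by rewrite paddr_eq0 ?sqr_ge0 // !sqrf_eq0 !normr_eq0 !subr_eq0 => /andP[/eqP -> /eqP ->].
Qed.

Section CollocationConstraints.
Variables (R : realType) (U A : Type) (Us As : lmodType R).
Variables (evU : Us -> U -> R) (evA : As -> A -> R).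
Variables (d Q Qb J M MO : nat) (hQb : (Qb <= Q)%N) (hMO : (MO <= M)%N).
Variables (x : 'I_M -> 'rV[R]_d).
Variables (L : 'I_Q -> U -> 'rV[R]_d -> R) (Lt : 'I_J -> A -> 'rV[R]_d -> R).
Variables (phi : 'I_Q -> 'I_M -> Us) (phit : 'I_J -> 'I_M -> As).
Hypothesis hphi : forall (q : 'I_Q) (m : 'I_M), ((q < Qb)%N || (m < MO)%N) ->
  evU (phi q m) = fun u => L q u (x m).
Hypothesis hphit : forall j m, evA (phit j m) = fun a => Lt j a (x m).
Variables (P : ('I_Q -> R) -> ('I_J -> R) -> R) (B : ('I_Qb -> R) -> ('I_J -> R) -> R).

Let phiv (k : 'I_(M * Qb + MO * (Q - Qb))) := nth 0 (phi_seq Qb MO phi) k.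
Let phitv (k : 'I_(J * M)) := nth 0 (phit_seq phit) k.

Lemma vnth_measvec_phi u (q : 'I_Q) (m : 'I_M) : ((q < Qb)%N || (m < MO)%N) ->
  vnth (measvec evU phiv u) (pos Qb M MO q m) = L q u (x m).
Proof.
move=> q_m; have lt_m : (m < cnt Qb M MO q)%N.
  by rewrite /cnt; case: ifP q_m => //= _ _; apply: ltn_ord.
by rewrite vnth_measvec_nth ?pos_lt // nth_phi_seq_pos // hphi.
Qed.

Lemma vnth_measvec_phit a (j : 'I_J) (m : 'I_M) :
  vnth (measvec evA phitv a) (j * M + m) = Lt j a (x m).
Proof. by rewrite vnth_measvec_nth ?phit_index_lt // nth_phit_seq hphit. Qed.

Lemma Fmap_measvec u a :
  Fmap MO hQb P B (measvec evU phiv u) (measvec evA phitv a) =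
  \col_m (if (m < MO)%N then P (fun q => L q u (x m)) (fun j => Lt j a (x m))
          else B (fun q => L (widen_ord hQb q) u (x m)) (fun j => Lt j a (x m))).
Proof.
apply/matrixP => m k; rewrite !mxE; case: ifP => lt_m.
  by congr P; apply: funext => ?; rewrite ?vnth_measvec_phi ?vnth_measvec_phit ?lt_m ?orbT.
by congr B; apply: funext => q; rewrite ?vnth_measvec_phi ?vnth_measvec_phit //= ltn_ord.
Qed.

End CollocationConstraints.

Unset Implicit Arguments.

Theorem corollary4p4
  (R : realType)
  (* the spaces U, A, their duals and pairings, and the operators K, S *)
  (U A : completeNormedModType R) (Us As : lmodType R)
  (evU : Us -> U -> R) (evA : As -> A -> R)
  (K : Us -> U) (Kinv : U -> Us) (S : As -> A) (Sinv : A -> As)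
  (hsepU : separable U) (hsepA : separable A)
  (hdU : is_dual_pairing evU) (hdA : is_dual_pairing evA)
  (hK : is_quadratic_norm_op evU K Kinv) (hS : is_quadratic_norm_op evA S Sinv)
  (* the domain and the PDE *)
  (d : nat) (Omega : set 'rV[R]_d) (hOmega : bounded_set Omega)
  (Q Qb J : nat) (hQb1 : (1 <= Qb)%N) (hQb : (Qb <= Q)%N)
  (L : 'I_Q -> U -> 'rV[R]_d -> R) (Lt : 'I_J -> A -> 'rV[R]_d -> R)
  (hL : forall q, bounded_linear_into_C Omega (L q))
  (hLb : forall q : 'I_Qb, bounded_linear_into_C (boundary Omega) (L (widen_ord hQb q)))
  (hLt : forall j, bounded_linear_into_C (closure Omega) (Lt j))
  (P : ('I_Q -> R) -> ('I_J -> R) -> R) (B : ('I_Qb -> R) -> ('I_J -> R) -> R)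
  (f g : 'rV[R]_d -> R)
  (* data *)
  (I : nat) (psi : 'I_I -> Us) (o : 'cV[R]_I) (gamma : R) (hgamma : gamma != 0)
  (* collocation points *)
  (M MO : nat) (hMO : (MO <= M)%N) (x : 'I_M -> 'rV[R]_d)
  (hxin : forall m : 'I_M, (m < MO)%N -> Omega (x m))
  (hxbd : forall m : 'I_M, (MO <= m)%N -> boundary Omega (x m))
  (* the functionals phi^(q)_m = delta_{x_m} o L_q and phit^(j)_m = delta_{x_m} o Lt_j *)
  (phi : 'I_Q -> 'I_M -> Us) (phit : 'I_J -> 'I_M -> As)
  (hphi : forall (q : 'I_Q) (m : 'I_M), ((q < Qb)%N || (m < MO)%N) ->
            evU (phi q m) = fun u => L q u (x m))
  (hphit : forall j m, evA (phit j m) = fun a => Lt j a (x m)) :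
  let N := (M * Qb + MO * (Q - Qb))%N in
  let Nt := (J * M)%N in
  let phiv : 'I_N -> Us := fun k => nth 0 (phi_seq Qb MO phi) k in
  let phitv : 'I_Nt -> As := fun k => nth 0 (phit_seq phit) k in
  let varphi : 'I_(I + N) -> Us :=
    fun n => match fintype.split n with inl i => psi i | inr k => phiv k end in
  let Theta : 'M[R]_(I + N) := \matrix_(i, n) evU (varphi i) (K (varphi n)) in
  let Thetat : 'M[R]_Nt := \matrix_(i, n) evA (phitv i) (S (phitv n)) in
  let chi : 'I_(I + N) -> U := fun i => \sum_n (invmx Theta) i n *: K (varphi n) in
  let chit : 'I_Nt -> A := fun i => \sum_n (invmx Thetat) i n *: S (phitv n) in
  let y : 'cV[R]_M := \col_m (if (m < MO)%N then f (x m) else g (x m)) in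
  (* the infinite-dimensional problem *)
  let Cinf (ua : U * A) : Prop :=
    forall m : 'I_M,
      ((m < MO)%N -> P (fun q => L q ua.1 (x m)) (fun j => Lt j ua.2 (x m)) = f (x m)) /\
      ((MO <= m)%N ->
         B (fun q => L (widen_ord hQb q) ua.1 (x m)) (fun j => Lt j ua.2 (x m)) = g (x m)) in
  let objinf (ua : U * A) : R :=
    `|ua.1| ^+ 2 + `|ua.2| ^+ 2 + gamma^-2 * \sum_(i < I) (evU (psi i) ua.1 - o i 0) ^+ 2 in
  (* the finite-dimensional problem *)
  let Cfin (zz : 'cV[R]_(I + N) * 'cV[R]_Nt) : Prop :=
    Fmap MO hQb P B (dsubmx zz.1) zz.2 = y in
  let objfin (zz : 'cV[R]_(I + N) * 'cV[R]_Nt) : R :=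
    (zz.1^T *m invmx Theta *m zz.1) 0 0 + (zz.2^T *m invmx Thetat *m zz.2) 0 0
    + gamma^-2 * \sum_(i < I) (usubmx zz.1 i 0 - o i 0) ^+ 2 in
  Theta \in unitmx -> Thetat \in unitmx ->
  forall (udag : U) (adag : A),
    is_minimizer Cinf objinf (udag, adag) <->
    exists (zdag : 'cV[R]_(I + N)) (ztdag : 'cV[R]_Nt),
      is_minimizer Cfin objfin (zdag, ztdag) /\
      udag = \sum_n zdag n 0 *: chi n /\ adag = \sum_n ztdag n 0 *: chit n.
Proof.
move=> N Nt phiv phitv varphi Theta Thetat chi chit y Cinf objinf Cfin objfin.
move=> Theta_unit Thetat_unit.
case: hdU => evlU evrU _ _ _; case: hdA => evlA evrA _ _ _.
have gramU_unit : gram evU K varphi \in unitmx := Theta_unit.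
have gramA_unit : gram evA S phitv \in unitmx := Thetat_unit.
pose coef (ua : U * A) := (measvec evU varphi ua.1, measvec evA phitv ua.2).
pose recon (zz : 'cV[R]_(I + N) * 'cV[R]_Nt) :=
  (synth evU K varphi zz.1, synth evA S phitv zz.2).
pose defect (ua : U * A) :=
  `|ua.1 - (recon (coef ua)).1| ^+ 2 + `|ua.2 - (recon (coef ua)).2| ^+ 2.
have reconK : cancel recon coef.
  case=> z zt; rewrite /coef /= (measvec_synth evlU evrU hK gramU_unit).
  by rewrite (measvec_synth evlA evrA hS gramA_unit).
have feasE ua : Cinf ua <-> Cfin (coef ua).
  by rewrite /Cfin /= dsubmx_measvec (Fmap_measvec hQb hMO hphi hphit) col_if_eqP.
have objE ua : objinf ua = objfin (coef ua) + defect ua.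
  rewrite /objinf /objfin /defect /= usubmx_measvec.
  rewrite -(sqr_norm_synth evlU evrU hK gramU_unit).
  rewrite -(sqr_norm_synth evlA evrA hS gramA_unit).
  rewrite (sqr_norm_synth_residual evlU evrU hK gramU_unit ua.1).
  rewrite (sqr_norm_synth_residual evlA evrA hS gramA_unit ua.2).
  under [in RHS]eq_bigr do rewrite mxE.
  by rewrite addrACA (addrAC _ (gamma^-2 * _)).
have defect_ge0 ua : 0 <= defect ua by rewrite addr_ge0 ?sqr_ge0.
have defect0P ua : defect ua = 0 <-> ua = recon (coef ua).
  by case: ua => u a; rewrite sqr_normB_add_eq0P.
move=> udag adag; rewrite (is_minimizer_transfer reconK feasE objE defect_ge0 defect0P).
split=> [[[z zt] [z_min [-> ->]]] | [z [zt [z_min [-> ->]]]]]; first by exists z, zt.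
by exists (z, zt).
Qed.
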